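(* Let $G$ be a group, $E$ a real Banach space, and $f\in KJ(G;E)$. For $m\ge 2$ let $\varphi_m(x)=\lim_{k\to\infty}\frac{1}{m^k}f(x^{m^k})$. Then $\varphi_2=\varphi_m$ for every $m\ge 2$.
   Context: $KJ(G;E)$ is the space of functions $f\colon G\to E$ for which there exists $c>0$ with $\|f(xy)+f(xy^{-1})-2f(x)\|\le c$ for all $x,y\in G$. For $f\in KJ(G;E)$ and $m\ge2$ the limit defining $\varphi_m(x)$ exists in $E$ for every $x\in G$. *)

From HB Require Import structures.
From mathcomp Require Import all_boot all_order all_algebra.
From mathcomp Require Import all_classical all_reals all_analysis.
Set Implicit Arguments. Unset Strict Implicit. Unset Printing Implicit Defensive.
Import Order.TTheory GRing.Theory Num.Theory.
Import numFieldNormedType.Exports.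
Local Open Scope classical_set_scope.
Local Open Scope ring_scope.

Definition KJ (R : realType) (G : groupType) (E : normedModType R)
    (f : G -> E) : Prop :=
  exists c : R, 0 < c /\
    forall x y : G, `|f (x * y)%g + f (x * y^-1)%g - 2 *: f x| <= c.

Definition phi (R : realType) (G : groupType) (E : normedModType R)
    (f : G -> E) (m : nat) (x : G) : E :=
  lim ((fun k : nat => ((m ^ k)%N%:R : R)^-1 *: f (x ^+ (m ^ k))%g) @ \oo).

From HB Require Import structures.
From mathcomp Require Import all_boot all_order all_algebra.
From mathcomp Require Import all_classical all_reals all_analysis.
Import numFieldNormedType.Exports.
From mathcomp Require Import lra ring zify.
Set Implicit Arguments. Unset Strict Implicit. Unset Printing Implicit Defensive.
Import Order.TTheory GRing.Theory Num.Theory.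
Local Open Scope classical_set_scope.
Local Open Scope ring_scope.

(* Along the powers of a fixed x, n |-> f(x^n) - f(1) is approximately additive,
   because for commuting p, q twice f(pq) - f(p) - f(q) + f(1) is a signed sum of
   three Jensen defects.  An approximately additive h satisfies
   |h(P)/P - h(Q)/Q| <= 2K(1/P + 1/Q), so f(x^n)/n is Cauchy and converges in the
   Banach space E; phi_m(x) is the limit of its subsequence n = m^k, hence does
   not depend on m. *)

Lemma jensen_defect_identity (V : zmodType) (a b d p q o : V) :
  (a - p - q + o) *+ 2 = (a + b - p *+ 2) + (a + d - q *+ 2) - (b + d - o *+ 2).
Proof.
rewrite !mulr2n !opprD !opprK !addrA.
by rewrite [RHS](ACl (1*3*7*11*5*4*8*12*2*9*6*10)) /= !addrK.
Qed.

Section QuasiJensen.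
Variables (R : realType) (G : groupType) (E : normedModType R) (f : G -> E) (c : R).
Hypothesis hc : forall x y : G, `|f (x * y)%g + f (x * y^-1)%g - 2 *: f x| <= c.

Lemma jensen_defect_commute (p q : G) : commute p q ->
  `|f (p * q)%g - f p - f q + f 1%g| <= 3 / 2 * c.
Proof.
move=> pq.
have J1 := hc p q; have J2 := hc q p; have J3 := hc 1%g (p * q^-1)%g.
rewrite -pq in J2; rewrite !mul1g invgM invgK in J3.
move: J1 J2 J3; rewrite !scaler_nat => J1 J2 J3.
suff : `|(f (p * q)%g - f p - f q + f 1%g) *+ 2| <= 3 * c by rewrite normrMn mulr2n; lra.
rewrite (jensen_defect_identity _ (f (p * q^-1)%g) (f (q * p^-1)%g)).
apply: (le_trans (ler_normB _ _)); apply: (le_trans (lerD (ler_normD _ _) (lexx _))).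
by apply: (le_trans (lerD (lerD J1 J2) J3)); lra.
Qed.

Lemma jensen_pow_approx_additive (x : G) (a b : nat) :
  `|(f (x ^+ (a + b))%g - f 1%g) - (f (x ^+ a)%g - f 1%g) - (f (x ^+ b)%g - f 1%g)|
    <= 3 / 2 * c.
Proof.
rewrite !opprB !addrA subrK addrAC expgnDr.
exact/jensen_defect_commute/commuteX2.
Qed.

End QuasiJensen.

Section ApproxAdditive.
Variables (R : realType) (E : normedModType R) (h : nat -> E) (K : R).
Hypothesis hK : forall a b : nat, `|h (a + b)%N - h a - h b| <= K.

Lemma approx_additive_bound_ge0 : 0 <= K.
Proof. exact: le_trans (normr_ge0 _) (hK 0 0). Qed.

Lemma approx_additive_mulnl (n a : nat) : `|h (n * a)%N - n%:R *: h a| <= n.+1%:R * K.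
Proof.
elim: n => [|n IH].
  by rewrite mul0n scale0r subr0 mul1r; have := hK 0 0; rewrite addn0 subrr sub0r normrN.
have -> : h (n.+1 * a)%N - n.+1%:R *: h a =
    (h (a + n * a)%N - h a - h (n * a)%N) + (h (n * a)%N - n%:R *: h a).
  by rewrite mulSn -nat1r scalerDl scale1r opprD addrA [RHS]addrA subrK.
by apply: (le_trans (ler_normD _ _)); rewrite -nat1r mulrDl mul1r lerD.
Qed.

Lemma approx_additive_cross (P Q : nat) :
  `|Q%:R *: h P - P%:R *: h Q| <= (P.+1 + Q.+1)%:R * K.
Proof.
have -> : Q%:R *: h P - P%:R *: h Q =
    (h (P * Q)%N - P%:R *: h Q) - (h (Q * P)%N - Q%:R *: h P).
  by rewrite mulnC opprB [RHS]addrC [RHS]addrA subrK.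
rewrite natrD mulrDl; apply: (le_trans (ler_normB _ _)).
by apply: lerD; apply: approx_additive_mulnl.
Qed.

Lemma approx_additive_quotient (P Q : nat) : (0 < P)%N -> (0 < Q)%N ->
  `|P%:R^-1 *: h P - Q%:R^-1 *: h Q| <= 2 * K * (P%:R^-1 + Q%:R^-1).
Proof.
move=> P0 Q0.
have Pr0 : P%:R != 0 :> R by rewrite pnatr_eq0 -lt0n.
have Qr0 : Q%:R != 0 :> R by rewrite pnatr_eq0 -lt0n.
have -> : P%:R^-1 *: h P - Q%:R^-1 *: h Q =
    (P%:R^-1 * Q%:R^-1) *: (Q%:R *: h P - P%:R *: h Q).
  by rewrite scalerBr !scalerA mulfVK // [_ * Q%:R^-1]mulrC mulfVK.
have PQ0 : 0 <= P%:R^-1 * Q%:R^-1 :> R by rewrite mulr_ge0 ?invr_ge0.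
rewrite normrZ ger0_norm //.
apply: (le_trans (ler_wpM2l PQ0 (approx_additive_cross P Q))).
have SPQ : (P.+1 + Q.+1)%:R <= 2 * (P%:R + Q%:R) :> R.
  by rewrite -natrD -natrM ler_nat; lia.
apply: (le_trans (ler_wpM2l PQ0 (ler_wpM2r approx_additive_bound_ge0 SPQ))).
rewrite [leRHS](_ : _ = P%:R^-1 * Q%:R^-1 * (2 * (P%:R + Q%:R) * K)) //.
by field; apply/andP.
Qed.

End ApproxAdditive.

Lemma cvgn_harmonic_cauchy (R : realType) (E : completeNormedModType R)
    (u : nat -> E) (C : R) :
  (forall P Q : nat, (0 < P)%N -> (0 < Q)%N ->
    `|u P - u Q| <= C * (P%:R^-1 + Q%:R^-1)) ->
  cvgn u.
Proof.
move=> uPQ; apply/cauchy_cvgP/cauchy_ballP => e e0.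
have small : \forall n \near \oo, (0 < n)%N /\ C * n%:R^-1 < e / 2.
  near=> n; split; first by near: n; exact: nbhs_infty_gt.
  have n0 : 0 < n%:R :> R by rewrite ltr0n; near: n; exact: nbhs_infty_gt.
  rewrite ltr_pdivrMr // [_ * n%:R]mulrC -ltr_pdivrMr ?divr_gt0 //.
  by near: n; apply: nbhs_infty_gtr.
rewrite near_map2; near=> P Q; rewrite -ball_normE /=.
have [P0 CP] : (0 < P)%N /\ C * P%:R^-1 < e / 2 by near: P.
have [Q0 CQ] : (0 < Q)%N /\ C * Q%:R^-1 < e / 2 by near: Q.
by apply: (le_lt_trans (uPQ _ _ P0 Q0)); rewrite mulrDr [e]splitr ltrD.
Unshelve. all: end_near. Qed.

Lemma approx_additive_quotient_cvg (R : realType) (E : completeNormedModType R)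
    (h : nat -> E) (K : R) :
  (forall a b : nat, `|h (a + b)%N - h a - h b| <= K) ->
  cvgn (fun n => n%:R^-1 *: h n).
Proof.
by move=> hK; apply: (@cvgn_harmonic_cauchy _ _ _ (2 * K)) => P Q; apply: approx_additive_quotient.
Qed.

Lemma cvgn_inv_natr (R : realType) : cvgn (fun n : nat => n%:R^-1 : R).
Proof. by apply/cvg_ex; exists 0; rewrite -cvg_shiftS; exact: cvg_harmonic. Qed.

Lemma KJ_pow_quotient_cvg (R : realType) (G : groupType) (E : completeNormedModType R)
    (f : G -> E) (x : G) : KJ f -> cvgn (fun n => n%:R^-1 *: f (x ^+ n)%g).
Proof.
case=> c [_ hc].
have -> : (fun n => n%:R^-1 *: f (x ^+ n)%g) =
    (fun n => n%:R^-1 *: (f (x ^+ n)%g - f 1%g)) + (fun n => n%:R^-1 *: f 1%g).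
  by apply/funext => n; rewrite [RHS]/GRing.add /= -scalerDr subrK.
apply: is_cvgD; first exact: approx_additive_quotient_cvg (jensen_pow_approx_additive hc x).
by apply: is_cvgZ; [exact: cvgn_inv_natr | exact: is_cvg_cst].
Qed.

Lemma expn_cvgny (m : nat) : (1 < m)%N -> (fun k => m ^ k)%N @ \oo --> \oo.
Proof.
move=> m1; apply/cvgnyPge => A; exists A => // k /= Ak.
exact/ltnW/(leq_ltn_trans Ak)/ltn_expl.
Qed.

Lemma lim_comp_cvgny (T : ptopologicalType) (u : nat -> T) (e : nat -> nat) :
  hausdorff_space T -> cvgn u -> e @ \oo --> \oo -> lim ((u \o e) @ \oo) = lim (u @ \oo).
Proof. by move=> T_sep u_cvg e_ny; apply: cvg_lim => //; exact: cvg_comp e_ny u_cvg. Qed.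

Theorem lemma2p6 (R : realType) (G : groupType) (E : completeNormedModType R)
    (f : G -> E) (hf : KJ f) (m : nat) (hm : (2 <= m)%N) :
  phi f 2 = phi f m.
Proof.
apply/funext => x; have u_cvg := KJ_pow_quotient_cvg (x := x) hf.
by rewrite /phi !(lim_comp_cvgny _ u_cvg) //; apply: expn_cvgny.
Qed.
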